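(* Let $G_1,G_2,\dots$ be probability generating functions of nonnegative integer-valued random variables with $\rho_i=G_i'(1)\in(0,1)$ and $G_i''(1)<\infty$, such that $\lim_{n}\rho_n=1$, $\sum_{n=1}^\infty(1-\rho_n)=\infty$, and $\lim_n G_n''(1)/(1-\rho_n)=0$. With $\rho_{[j,n]}=\rho_{j+1}\cdots\rho_n$, $\vartheta_{i,n}=\big(1-G_i(1-\rho_{[i,n]})\big)/\rho_{[i,n]}$ and $\vartheta_{[j,n]}=\vartheta_{j+1,n}\cdots\vartheta_{n,n}$ (empty products $=1$), one has $$\lim_{n\to\infty}\sum_{j=1}^n(1-\rho_j)\vartheta_{[j,n]}=1.$$ *)

From Stdlib Require Import Reals.
Open Scope R_scope.

(* prod_range f j n = f (j+1) * ... * f n  (empty product = 1 when n <= j). *)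
Fixpoint prod_range (f : nat -> R) (j n : nat) : R :=
  match n with
  | O => 1
  | S m => if Nat.leb (S m) j then 1 else prod_range f j m * f (S m)
  end.

Fixpoint sum1 (f : nat -> R) (n : nat) : R :=
  match n with
  | O => 0
  | S m => sum1 f m + f (S m)
  end.

Definition is_pgf (p : nat -> R) (G : R -> R) : Prop :=
  (forall k, 0 <= p k) /\ infinite_sum p 1 /\
  (forall s, 0 <= s <= 1 -> infinite_sum (fun k => p k * s ^ k) (G s)).

(* G'(1) = sum_k k p_k (the left derivative at 1 = first factorial moment). *)
Definition pgf_d1 (p : nat -> R) (d : R) : Prop :=
  infinite_sum (fun k => INR k * p k) d.

(* G''(1) = sum_k k(k-1) p_k, finite (second factorial moment). *)
Definition pgf_d2 (p : nat -> R) (d : R) : Prop :=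
  infinite_sum (fun k => INR k * (INR k - 1) * p k) d.

Definition rho_int (rho : nat -> R) (j n : nat) : R := prod_range rho j n.

Definition theta (G : nat -> R -> R) (rho : nat -> R) (i n : nat) : R :=
  (1 - G i (1 - rho_int rho i n)) / rho_int rho i n.

Definition theta_int (G : nat -> R -> R) (rho : nat -> R) (j n : nat) : R :=
  prod_range (fun i => theta G rho i n) j n.

From Stdlib Require Import Reals Lra Lia.
Open Scope R_scope.

(* The probabilistic input is a two-sided estimate on each factor: for a pgf
   G with mean r and second factorial moment m, and 0 <= x <= 1,
       x (r - m) <= 1 - G(1 - x) <= x r,
   obtained termwise from  k x - k(k-1) x <= 1 - (1-x)^k <= k x.  With
   x = rho_[i,n] this gives  max(0, rho_i - m_i) <= theta_{i,n} <= rho_i.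

   The rest is about sequences only (section WeightedSum): for any factors
   th i n squeezed in this way, the weighted sum
       W n = sum_j (1 - rho_j) * prod_{j<i<=n} th i n
   tends to 1.  The tool is the telescoping identity
       sum_{N<j<=n} (1 - f_j) prod_{j<i<=n} f_i = 1 - prod_{N<i<=n} f_i.
   Taking f = rho bounds W n by 1.  For the lower bound, given d > 0 the
   hypotheses rho_i -> 1 and m_i = o(1 - rho_i) give, for i beyond some N,
   0 <= 1 - (1+d)(1 - rho_i) <= th i n; applying the identity to these
   factors yields (1+d) W n >= 1 - prod_{N<i<=n} rho_i, and this product
   is at most exp(-sum_{N<i<=n} (1 - rho_i)), which tends to 0. *)

(* Elementary bounds on 1 - (1-x)^k; the lower one is crude (for k >= 2 its
   left side is nonpositive) but suffices since m_i = o(1 - rho_i). *)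
Lemma one_minus_pow_bounds (x : R) (k : nat) : 0 <= x <= 1 ->
  0 <= 1 - (1 - x) ^ k <= INR k * x /\
  INR k * x - INR k * (INR k - 1) * x <= 1 - (1 - x) ^ k.
Proof.
  intros Hx.
  assert (Hbern : 1 - INR k * x <= (1 - x) ^ k <= 1).
  { induction k as [|k IH]; [simpl; lra|].
    rewrite S_INR. simpl. pose proof (pos_INR k). pose proof (pow_le (1 - x) k). nra. }
  split; [lra|].
  destruct k as [|[|k]]; [simpl; lra | simpl; lra |].
  assert (Hk : 2 <= INR (S (S k))) by (rewrite !S_INR; pose proof (pos_INR k); lra).
  assert (0 <= INR (S (S k)) * x * (INR (S (S k)) - 2)) by
    (apply Rmult_le_pos; [apply Rmult_le_pos|]; lra).
  nra.
Qed.

Lemma infinite_sum_lincomb (a b c : nat -> R) (la lb u v : R) :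
  infinite_sum a la -> infinite_sum b lb ->
  (forall k, c k = u * a k + v * b k) -> infinite_sum c (u * la + v * lb).
Proof.
  intros Ha Hb Hc.
  assert (Hcv : Un_cv (fun n => u * sum_f_R0 a n + v * sum_f_R0 b n) (u * la + v * lb)).
  { apply CV_plus; apply CV_mult; try assumption; intros e He; exists 0%nat;
      intros; unfold Rdist; rewrite Rminus_diag, Rabs_R0; lra. }
  intros e He. destruct (Hcv e He) as [N HN]. exists N. intros n Hn.
  replace (sum_f_R0 c n) with (u * sum_f_R0 a n + v * sum_f_R0 b n); [auto|].
  rewrite !scal_sum, <- plus_sum. apply sum_eq. intros k _. rewrite Hc. ring.
Qed.

Lemma infinite_sum_le (a b : nat -> R) (la lb : R) :
  (forall k, a k <= b k) -> infinite_sum a la -> infinite_sum b lb -> la <= lb.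
Proof.
  intros Hab Ha Hb.
  apply (Rle_cv_lim (Un := fun n => sum_f_R0 a n) (Vn := fun n => sum_f_R0 b n)); auto.
  intro n. apply sum_Rle. auto.
Qed.

Lemma pgf_complement_bounds (p : nat -> R) (G : R -> R) (r m x : R) :
  is_pgf p G -> pgf_d1 p r -> pgf_d2 p m -> 0 <= x <= 1 ->
  0 <= 1 - G (1 - x) <= x * r /\ x * (r - m) <= 1 - G (1 - x).
Proof.
  intros [Hp [Hmass HG]] Hr Hm Hx.
  assert (Hcompl := infinite_sum_lincomb _ _ (fun k => p k * (1 - (1 - x) ^ k)) _ _ 1 (-1)
                      Hmass (HG (1 - x) ltac:(lra)) ltac:(intro; cbv beta; ring)).
  assert (Hup := infinite_sum_lincomb _ _ (fun k => x * (INR k * p k)) _ _ x 0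
                   Hr Hr ltac:(intro; cbv beta; ring)).
  assert (Hlo := infinite_sum_lincomb _ _
                   (fun k => x * (INR k * p k) - x * (INR k * (INR k - 1) * p k)) _ _ x (-x)
                   Hr Hm ltac:(intro; cbv beta; ring)).
  assert (Hterm : forall k, 0 <= p k * (1 - (1 - x) ^ k) <= x * (INR k * p k) /\
                       x * (INR k * p k) - x * (INR k * (INR k - 1) * p k)
                       <= p k * (1 - (1 - x) ^ k)).
  { intro k. destruct (one_minus_pow_bounds x k Hx) as [[B0 B1] B2].
    pose proof (Hp k). split; [split|]; nra. }
  split; [split|].
  - pose proof (sum_incr _ 0 _ Hcompl (fun k => proj1 (proj1 (Hterm k)))).
    simpl in *. nra.
  - pose proof (infinite_sum_le _ _ _ _ (fun k => proj2 (proj1 (Hterm k))) Hcompl Hup). lra.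
  - pose proof (infinite_sum_le _ _ _ _ (fun k => proj2 (Hterm k)) Hlo Hcompl). lra.
Qed.

Lemma prod_range_empty (f : nat -> R) (j n : nat) : (n <= j)%nat -> prod_range f j n = 1.
Proof.
  destruct n as [|n]; [reflexivity|]. intro H. cbn [prod_range].
  destruct (Nat.leb_spec (S n) j); [reflexivity | lia].
Qed.

Lemma prod_range_last (f : nat -> R) (j n : nat) :
  (j <= n)%nat -> prod_range f j (S n) = prod_range f j n * f (S n).
Proof. intro H. cbn [prod_range]. destruct (Nat.leb_spec (S n) j); [lia | reflexivity]. Qed.

Lemma prod_range_first (f : nat -> R) (j n : nat) :
  (j < n)%nat -> prod_range f j n = f (S j) * prod_range f (S j) n.
Proof.
  induction n as [|n IH]; intro H; [lia|].
  rewrite prod_range_last by lia.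
  destruct (Nat.eq_dec j n) as [->|Hne].
  - rewrite !prod_range_empty by lia. ring.
  - rewrite IH, prod_range_last by lia. ring.
Qed.

Lemma prod_range_le (f g : nat -> R) (j n : nat) :
  (forall i, (j < i <= n)%nat -> 0 <= f i <= g i) ->
  0 <= prod_range f j n <= prod_range g j n.
Proof.
  induction n as [|n IH]; intro H; [simpl; lra|].
  destruct (Nat.le_gt_cases (S n) j) as [Hempty|Hlast].
  - rewrite !prod_range_empty by lia. lra.
  - rewrite !prod_range_last by lia.
    destruct IH as [I0 I1]; [intros; apply H; lia|].
    destruct (H (S n)) as [Hf Hg]; [lia|].
    split; [apply Rmult_le_pos | apply Rmult_le_compat]; lra.
Qed.

Lemma prod_range_nonneg (f : nat -> R) (j n : nat) :
  (forall i, (j < i <= n)%nat -> 0 <= f i) -> 0 <= prod_range f j n.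
Proof.
  intro H. apply (prod_range_le f f). intros i Hi. specialize (H i Hi). lra.
Qed.

Lemma prod_range_pos (f : nat -> R) (j n : nat) :
  (forall i, (j < i <= n)%nat -> 0 < f i) -> 0 < prod_range f j n.
Proof.
  induction n as [|n IH]; intro H; [simpl; lra|].
  destruct (Nat.le_gt_cases (S n) j) as [Hempty|Hlast].
  - rewrite prod_range_empty by lia. lra.
  - rewrite prod_range_last by lia.
    apply Rmult_lt_0_compat; [apply IH; intros|]; apply H; lia.
Qed.

Lemma prod_range_le_1 (f : nat -> R) (j n : nat) :
  (forall i, (j < i <= n)%nat -> 0 <= f i <= 1) -> prod_range f j n <= 1.
Proof.
  induction n as [|n IH]; intro H; [simpl; lra|].
  destruct (Nat.le_gt_cases (S n) j) as [Hempty|Hlast].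
  - rewrite prod_range_empty by lia. lra.
  - rewrite prod_range_last by lia.
    assert (0 <= prod_range f j n).
    { apply prod_range_nonneg. intros i Hi. destruct (H i); [lia | lra]. }
    assert (prod_range f j n <= 1) by (apply IH; intros; apply H; lia).
    destruct (H (S n)); [lia|]. nra.
Qed.

Lemma sum1_le (a b : nat -> R) (n : nat) :
  (forall j, (1 <= j <= n)%nat -> a j <= b j) -> sum1 a n <= sum1 b n.
Proof.
  induction n as [|n IH]; intro H; simpl; [lra|].
  apply Rplus_le_compat; [apply IH; intros|]; apply H; lia.
Qed.

Lemma sum1_scal (c : R) (a : nat -> R) (n : nat) :
  c * sum1 a n = sum1 (fun j => c * a j) n.
Proof. induction n as [|n IH]; simpl; [ring|]. rewrite <- IH. ring. Qed.

(* The telescoping identity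
     sum_{N<j<=n} (1 - f_j) prod_{j<i<=n} f_i = 1 - prod_{N<i<=n} f_i;
   the partial sums up to k equal prod_{max(k,N)<i<=n} f_i - prod_{N<i<=n} f_i. *)
Lemma telescoping_tail (f : nat -> R) (N n : nat) : (N <= n)%nat ->
  sum1 (fun j => if (j <=? N)%nat then 0 else (1 - f j) * prod_range f j n) n
  = 1 - prod_range f N n.
Proof.
  intro HNn.
  assert (Hpartial : forall k, (k <= n)%nat ->
    sum1 (fun j => if (j <=? N)%nat then 0 else (1 - f j) * prod_range f j n) k
    = prod_range f (Nat.max k N) n - prod_range f N n).
  { induction k as [|k IH]; intro Hk; cbn [sum1].
    - rewrite Nat.max_r by lia. ring.
    - rewrite IH by lia. destruct (Nat.leb_spec (S k) N).
      + rewrite Nat.max_r, (Nat.max_r (S k)) by lia. ring.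
      + rewrite Nat.max_l, (Nat.max_l (S k)) by lia.
        rewrite (prod_range_first f k n) by lia. ring. }
  rewrite Hpartial, Nat.max_l, prod_range_empty by lia. reflexivity.
Qed.

(* prod_{N<i<=n} f_i <= exp(-sum_{N<i<=n} (1 - f_i)), from f_i <= exp(f_i - 1). *)
Lemma prod_range_le_exp (f : nat -> R) (N n : nat) :
  (forall i, (N < i)%nat -> 0 <= f i) -> (N <= n)%nat ->
  prod_range f N n <= exp (- (sum1 (fun i => 1 - f i) n - sum1 (fun i => 1 - f i) N)).
Proof.
  intro Hf. induction n as [|n IH]; intro HN.
  - replace N with 0%nat by lia. simpl. replace (- (0 - 0)) with 0 by ring. rewrite exp_0. lra.
  - destruct (Nat.eq_dec N (S n)) as [<-|Hne].
    + rewrite prod_range_empty by lia. rewrite Rminus_diag, Ropp_0, exp_0. lra.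
    + rewrite prod_range_last by lia. simpl sum1.
      set (s := sum1 (fun i => 1 - f i)).
      replace (- (s n + (1 - f (S n)) - s N)) with (- (s n - s N) + (- (1 - f (S n)))) by ring.
      rewrite exp_plus.
      pose proof (exp_ineq1_le (- (1 - f (S n)))).
      assert (0 <= prod_range f N n) by (apply prod_range_nonneg; intros i Hi; apply Hf; lia).
      assert (0 <= f (S n)) by (apply Hf; lia).
      apply Rmult_le_compat; [lra | lra | apply IH; lia | lra].
Qed.

Lemma prod_range_vanishes (f : nat -> R) (N : nat) :
  (forall i, (N < i)%nat -> 0 <= f i) -> cv_infty (sum1 (fun i => 1 - f i)) ->
  Un_cv (fun n => prod_range f N n) 0.
Proof.
  intros Hf Hdiv eps Heps.
  destruct (Hdiv (sum1 (fun i => 1 - f i) N - ln eps)) as [M HM].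
  exists (Nat.max N M). intros n Hn. unfold Rdist. rewrite Rminus_0_r.
  rewrite Rabs_pos_eq by (apply prod_range_nonneg; intros i Hi; apply Hf; lia).
  eapply Rle_lt_trans; [apply prod_range_le_exp; [exact Hf | lia]|].
  rewrite <- (exp_ln eps) by exact Heps. apply exp_increasing.
  specialize (HM n ltac:(lia)). lra.
Qed.

Section WeightedSum.

Variables (rho m : nat -> R) (th : nat -> nat -> R).

Hypothesis rho_range : forall i, (1 <= i)%nat -> 0 < rho i < 1.
Hypothesis th_range : forall i n, (1 <= i)%nat -> 0 <= th i n <= rho i.
Hypothesis th_lower : forall i n, (1 <= i)%nat -> rho i - m i <= th i n.
Hypothesis rho_lim : Un_cv rho 1.
Hypothesis rho_div : cv_infty (sum1 (fun i => 1 - rho i)).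
Hypothesis m_small : Un_cv (fun i => m i / (1 - rho i)) 0.

Definition weighted_sum (n : nat) : R :=
  sum1 (fun j => (1 - rho j) * prod_range (fun i => th i n) j n) n.

(* Upper bound: replace th by rho and telescope from N = 0. *)
Lemma weighted_sum_le_1 (n : nat) : weighted_sum n <= 1.
Proof.
  assert (Hprod : 0 <= prod_range rho 0 n).
  { apply prod_range_nonneg. intros i Hi. destruct (rho_range i); [lia | lra]. }
  apply Rle_trans with (1 - prod_range rho 0 n); [|lra].
  rewrite <- telescoping_tail by lia. apply sum1_le. intros j Hj.
  destruct (Nat.leb_spec j 0); [lia|].
  destruct (rho_range j) as [Hj0 Hj1]; [lia|].
  apply Rmult_le_compat_l; [lra|].
  apply prod_range_le. intros i Hi. apply th_range. lia.
Qed.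

Lemma eventually_dominated (d : R) : 0 < d ->
  exists N, forall i, (N < i)%nat -> 0 <= 1 - (1 + d) * (1 - rho i) <= rho i - m i.
Proof.
  intro Hd.
  destruct (rho_lim (/ (1 + d))) as [N1 HN1]; [apply Rlt_gt, Rinv_0_lt_compat; lra|].
  destruct (m_small d Hd) as [N2 HN2].
  exists (S (N1 + N2)). intros i Hi.
  destruct (rho_range i) as [Hi0 Hi1]; [lia|].
  specialize (HN1 i ltac:(lia)). specialize (HN2 i ltac:(lia)). unfold Rdist in HN1, HN2.
  apply Rabs_def2 in HN1. apply Rabs_def2 in HN2.
  assert (E1 : (1 + d) * / (1 + d) = 1) by (field; lra).
  assert (E2 : m i / (1 - rho i) * (1 - rho i) = m i) by (field; lra).
  split; nra.
Qed.

(* Lower bound: telescoping with the factors r_i beyond N, which are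
   dominated by th i n and whose weights 1 - r_i = (1+d)(1 - rho_i). *)
Lemma weighted_sum_lower (d : R) : 0 < d ->
  exists N, forall n, (N <= n)%nat -> 1 - prod_range rho N n <= (1 + d) * weighted_sum n.
Proof.
  intro Hd. destruct (eventually_dominated d Hd) as [N HN].
  exists N. intros n Hn.
  set (r := fun i => 1 - (1 + d) * (1 - rho i)).
  assert (Hr : forall i, (N < i)%nat -> 0 <= r i <= th i n).
  { intros i Hi. destruct (HN i Hi). pose proof (th_lower i n ltac:(lia)). unfold r. lra. }
  apply Rle_trans with (1 - prod_range r N n).
  - assert (prod_range r N n <= prod_range rho N n); [|lra].
    apply prod_range_le. intros i Hi.
    destruct (Hr i) as [Hr0 Hr1]; [lia|]. destruct (th_range i n); [lia | lra].
  - rewrite <- telescoping_tail by exact Hn. unfold weighted_sum. rewrite sum1_scal.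
    apply sum1_le. intros j Hj. destruct (rho_range j) as [Hj0 Hj1]; [lia|].
    assert (Hprod : 0 <= prod_range (fun i => th i n) j n).
    { apply prod_range_nonneg. intros i Hi. destruct (th_range i n); [lia | lra]. }
    destruct (Nat.leb_spec j N).
    + apply Rmult_le_pos; [lra|]. apply Rmult_le_pos; lra.
    + replace (1 - r j) with ((1 + d) * (1 - rho j)) by (unfold r; ring).
      rewrite Rmult_assoc. apply Rmult_le_compat_l; [lra|].
      apply Rmult_le_compat_l; [lra|].
      apply prod_range_le. intros i Hi. apply Hr. lia.
Qed.

(* With d = eps/2 and the tail product below eps/4, W n > 1 - eps. *)
Theorem weighted_sum_cv : Un_cv weighted_sum 1.
Proof.
  intros eps Heps.
  destruct (weighted_sum_lower (eps / 2)) as [N HN]; [lra|].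
  assert (Hvan : Un_cv (fun n => prod_range rho N n) 0).
  { apply prod_range_vanishes; [|exact rho_div].
    intros i Hi. destruct (rho_range i); [lia | lra]. }
  destruct (Hvan (eps / 4)) as [M HM]; [lra|].
  exists (Nat.max N M). intros n Hn.
  specialize (HN n ltac:(lia)). specialize (HM n ltac:(lia)).
  unfold Rdist in *. rewrite Rminus_0_r in HM.
  apply Rabs_def2 in HM. pose proof (weighted_sum_le_1 n).
  apply Rabs_def1; nra.
Qed.

End WeightedSum.

Lemma rho_int_range (rho : nat -> R) (j n : nat) :
  (forall i, (1 <= i)%nat -> 0 < rho i < 1) -> 0 < rho_int rho j n <= 1.
Proof.
  intro Hrho. unfold rho_int. split.
  - apply prod_range_pos. intros i Hi. apply Hrho. lia.
  - apply prod_range_le_1. intros i Hi. destruct (Hrho i); [lia | lra].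
Qed.

Lemma theta_bounds (p : nat -> R) (G : nat -> R -> R) (rho : nat -> R) (m : R) (i n : nat) :
  is_pgf p (G i) -> pgf_d1 p (rho i) -> pgf_d2 p m -> 0 < rho_int rho i n <= 1 ->
  0 <= theta G rho i n <= rho i /\ rho i - m <= theta G rho i n.
Proof.
  intros Hpgf Hd1 Hd2 Hx. unfold theta. set (x := rho_int rho i n) in *.
  destruct (pgf_complement_bounds p (G i) (rho i) m x Hpgf Hd1 Hd2 ltac:(lra)) as [[B0 B1] B2].
  set (y := 1 - G i (1 - x)) in *.
  assert (E : y / x * x = y) by (field; lra).
  assert (0 <= y / x) by (apply Rle_mult_inv_pos; lra).
  split; [split|]; nra.
Qed.

Theorem mainTheorem8
  (p : nat -> nat -> R) (G : nat -> R -> R) (rho m2 : nat -> R)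
  (Hpgf : forall i, (1 <= i)%nat -> is_pgf (p i) (G i))
  (Hd1 : forall i, (1 <= i)%nat -> pgf_d1 (p i) (rho i))
  (Hrho : forall i, (1 <= i)%nat -> 0 < rho i < 1)
  (Hd2 : forall i, (1 <= i)%nat -> pgf_d2 (p i) (m2 i))
  (Hlim : Un_cv rho 1)
  (Hdiv : cv_infty (sum1 (fun n => 1 - rho n)))
  (Hratio : Un_cv (fun n => m2 n / (1 - rho n)) 0) :
  Un_cv (fun n => sum1 (fun j => (1 - rho j) * theta_int G rho j n) n) 1.
Proof.
  assert (Htheta : forall i n, (1 <= i)%nat ->
    0 <= theta G rho i n <= rho i /\ rho i - m2 i <= theta G rho i n).
  { intros i n Hi. apply (theta_bounds (p i)); auto. apply rho_int_range, Hrho. }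
  exact (weighted_sum_cv rho m2 (theta G rho) Hrho
           (fun i n Hi => proj1 (Htheta i n Hi)) (fun i n Hi => proj2 (Htheta i n Hi))
           Hlim Hdiv Hratio).
Qed.
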